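(* Let $A$ and $B$ be finite-dimensional quantum systems, $\mathcal A$ a channel on $A$ with Kraus decomposition $\{A_i\}_{i=1}^{r_A}$ and $\mathcal B$ a channel on $B$ with Kraus decomposition $\{B_j\}_{j=1}^{r_B}$. Let $v\ge1$ and let $\{\alpha_{ik}\}_{i\le r_A,k\le v}$ and $\{\beta_{jk}\}_{j\le r_B,k\le v}$ be complex numbers with $\sum_{i,k}|\alpha_{ik}|^2=\sum_{j,k}|\beta_{jk}|^2=1$. Then there exist a $v$-dimensional vacuum sector $\mathrm{Vac}$ with orthonormal basis $\{|\upsilon_k\rangle\}_{k=1}^v$, a unit vector $|\upsilon_0\rangle\in\mathcal H_{\mathrm{Vac}}$, and vacuum extensions $\widetilde{\mathcal A}$ of $\mathcal A$ and $\widetilde{\mathcal B}$ of $\mathcal B$ with vacuum sector $\mathrm{Vac}$, such that the channel on $A\oplus B$ with Kraus operators $S_{ijk}:=A_i\beta_{jk}\oplus B_j\alpha_{ik}$ equals the superposition $\mathcal S=\mathcal T\circ(\widetilde{\mathcal A}\otimes\widetilde{\mathcal B})\circ\mathcal V$ of $\mathcal A$ and $\mathcal B$ specified by $\widetilde{\mathcal A},\widetilde{\mathcal B}$, the embedding $V$ (with vacuum vector $|\upsilon_0\rangle$) and a vacuum-discarding map $\mathcal T$.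
   Context: Let $\mathrm{Vac}$ be a sector (Hilbert space $\mathcal H_{\mathrm{Vac}}$ of dimension $v$) orthogonal to $A$ and to $B$, common to both. A vacuum extension of a channel $\mathcal C$ on $A$ is a channel $\widetilde{\mathcal C}$ on $\widetilde A=A\oplus\mathrm{Vac}$ such that (i) $\operatorname{Tr}[P_X\widetilde{\mathcal C}(\rho)]=1$ for every state $\rho$ supported in sector $X$, for $X=A$ and $X=\mathrm{Vac}$ (No Leakage), and (ii) its restriction to $A$ (the channel with Kraus operators $P_A\widetilde C_iP_A$) is $\mathcal C$. Let $\widetilde B=B\oplus\mathrm{Vac}$. The embedding $V:\mathcal H_A\oplus\mathcal H_B\to\mathcal H_{\widetilde A}\otimes\mathcal H_{\widetilde B}$ is $V(|\alpha\rangle\oplus|\beta\rangle)=|\alpha\rangle\otimes|\upsilon_0\rangle\oplus|\upsilon_0\rangle\otimes|\beta\rangle$ and $\mathcal V(\cdot)=V\cdot V^\dagger$. A vacuum-discarding map is $\mathcal T(\rho)=\sum_k T_k\rho T_k^\dagger+(1-\operatorname{Tr}[P_{\mathrm{succ}}\rho])|\psi_0\rangle\langle\psi_0|$, with $T_k=P_A\otimes\langle\upsilon_k|\oplus\langle\upsilon_k|\otimes P_B$, $P_{\mathrm{succ}}=P_A\otimes P_{\mathrm{Vac}}+P_{\mathrm{Vac}}\otimes P_B$, and $|\psi_0\rangle$ a fixed unit vector in $\mathcal H_A\oplus\mathcal H_B$. *)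

(* Complex scalars: an arbitrary numClosedFieldType C
   (the field of complex numbers is one). *)
From HB Require Import structures.
From mathcomp Require Export mxtens.
From mathcomp Require Import all_boot all_order all_algebra.
Set Implicit Arguments. Unset Strict Implicit. Unset Printing Implicit Defensive.
Import Order.TTheory GRing.Theory Num.Theory.
Local Open Scope ring_scope.

Section QDefs.
Variable C : numClosedFieldType.

Definition adj m n (M : 'M[C]_(m, n)) : 'M[C]_(n, m) := (map_mx Num.conj M)^T.

Definition psd n (rho : 'M[C]_n) : Prop :=
  forall x : 'cV[C]_n, 0 <= (adj x *m rho *m x) 0 0.
Definition density n (rho : 'M[C]_n) : Prop := psd rho /\ \tr rho = 1.

Definition kraus_apply (I : finType) m n (K : I -> 'M[C]_(m, n)) (rho : 'M[C]_n)
  : 'M[C]_m := \sum_(i : I) K i *m rho *m adj (K i).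

Definition is_channel (I : finType) n (K : I -> 'M[C]_n) : Prop :=
  \sum_(i : I) adj (K i) *m K i = 1%:M.

Definition same_channel (I J : finType) n (K : I -> 'M[C]_n) (L : J -> 'M[C]_n)
  : Prop := forall rho : 'M[C]_n, density rho -> kraus_apply K rho = kraus_apply L rho.

(* Sector A = first d coordinates, sector Vac = last v coordinates of A (+) Vac *)
Definition projA d v : 'M[C]_(d + v) := block_mx 1%:M 0 0 0.
Definition projV d v : 'M[C]_(d + v) := block_mx 0 0 0 1%:M.

Definition vacuum_extension (I J : finType) d v
  (K : I -> 'M[C]_d) (Kt : J -> 'M[C]_(d + v)) : Prop :=
  [/\ is_channel Kt,
      (forall rho : 'M[C]_(d + v), density rho -> projA d v *m rho *m projA d v = rho ->
         \tr (projA d v *m kraus_apply Kt rho) = 1),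
      (forall rho : 'M[C]_(d + v), density rho -> projV d v *m rho *m projV d v = rho ->
         \tr (projV d v *m kraus_apply Kt rho) = 1) &
      (* restriction to A (Kraus operators P_A Kt_j P_A, as operators on H_A) is K *)
      same_channel (fun j => ulsubmx (Kt j)) K].

Definition tens_kraus (I J : finType) m n p q
  (K : I -> 'M[C]_(m, n)) (L : J -> 'M[C]_(p, q)) (ij : I * J) : 'M[C]_(m * p, n * q) :=
  K ij.1 *t L ij.2.

Definition castc n k (M : 'M[C]_(n * 1, k)) : 'M[C]_(n, k) := castmx (muln1 n, erefl) M.
Definition castr k m (M : 'M[C]_(k, m * 1)) : 'M[C]_(k, m) := castmx (erefl, muln1 m) M.
Definition castc' n k (M : 'M[C]_(1 * n, k)) : 'M[C]_(n, k) := castmx (mul1n n, erefl) M.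
Definition castr' k m (M : 'M[C]_(k, 1 * m)) : 'M[C]_(k, m) := castmx (erefl, mul1n m) M.

(* embedding V : H_A (+) H_B -> H_{A~} (x) H_{B~},
   V(a (+) b) = a (x) u0 (+) u0 (x) b *)
Definition embedV dA dB v (u0 : 'cV[C]_v) : 'M[C]_((dA + v) * (dB + v), dA + dB) :=
  row_mx (castr ((col_mx 1%:M 0 : 'M[C]_(dA + v, dA)) *t (col_mx 0 u0 : 'cV[C]_(dB + v))))
         (castr' ((col_mx 0 u0 : 'cV[C]_(dA + v)) *t (col_mx 1%:M 0 : 'M[C]_(dB + v, dB)))).

(* T_k = P_A (x) <u_k| (+) <u_k| (x) P_B *)
Definition discT dA dB v (u : 'I_v -> 'cV[C]_v) (k : 'I_v)
  : 'M[C]_(dA + dB, (dA + v) * (dB + v)) :=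
  col_mx (castc ((row_mx 1%:M 0 : 'M[C]_(dA, dA + v)) *t (row_mx 0 (adj (u k)) : 'rV[C]_(dB + v))))
         (castc' ((row_mx 0 (adj (u k)) : 'rV[C]_(dA + v)) *t (row_mx 1%:M 0 : 'M[C]_(dB, dB + v)))).

Definition Psucc dA dB v : 'M[C]_((dA + v) * (dB + v)) :=
  projA dA v *t projV dB v + projV dA v *t projA dB v.

Definition vac_discard dA dB v (u : 'I_v -> 'cV[C]_v) (psi0 : 'cV[C]_(dA + dB))
  (rho : 'M[C]_((dA + v) * (dB + v))) : 'M[C]_(dA + dB) :=
  kraus_apply (discT dA dB u) rho
  + (1 - \tr (Psucc dA dB v *m rho)) *: (psi0 *m adj psi0).

Definition superposition (I J : finType) dA dB v
  (At : I -> 'M[C]_(dA + v)) (Bt : J -> 'M[C]_(dB + v))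
  (u0 : 'cV[C]_v) (u : 'I_v -> 'cV[C]_v) (psi0 : 'cV[C]_(dA + dB))
  (rho : 'M[C]_(dA + dB)) : 'M[C]_(dA + dB) :=
  vac_discard u psi0
    (kraus_apply (tens_kraus At Bt)
       (embedV dA dB u0 *m rho *m adj (embedV dA dB u0))).

Definition Skraus rA rB dA dB v (A : 'I_rA -> 'M[C]_dA) (B : 'I_rB -> 'M[C]_dB)
  (alpha : 'I_rA -> 'I_v -> C) (beta : 'I_rB -> 'I_v -> C)
  (ijk : 'I_rA * 'I_rB * 'I_v) : 'M[C]_(dA + dB) :=
  let: (i, j, k) := ijk in block_mx (beta j k *: A i) 0 0 (alpha i k *: B j).

End QDefs.

From HB Require Import structures.
From mathcomp Require Import all_boot all_order all_algebra.
Import Order.TTheory GRing.Theory Num.Theory.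
Local Open Scope ring_scope.
Set Implicit Arguments. Unset Strict Implicit. Unset Printing Implicit Defensive.

(* Take the standard basis [|k>] of [C^v] as vacuum basis and [u0 = |0>].  Extend each
   [A_i] to [A_i (+) |alpha_i><u0|], where [|alpha_i> = sum_k alpha_ik |k>], and add the
   single operator [0 (+) (1 - |u0><u0|)], which restores trace preservation; likewise for
   [B].  Then [T_k (At_i (x) Bt_j) V = A_i <k|beta_j> (+) B_j <k|alpha_i> = S_ijk], while
   every product involving an added operator vanishes because that operator annihilates
   [u0].  As [S] is trace preserving, the successful branch of [T] already has trace one,
   so the failure term of the vacuum-discarding map drops out. *)

Section Matrices.
Variable R : pzRingType.

Lemma castmx0 m n m' n' (e : (m = m') * (n = n')) : castmx e (0 : 'M[R]_(m, n)) = 0.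
Proof. by case: e => e1 e2; case: m' / e1; case: n' / e2. Qed.

Lemma castmxMl m m' n p (e : m = m') (A : 'M[R]_(m, n)) (B : 'M[R]_(n, p)) :
  castmx (e, erefl) A *m B = castmx (e, erefl) (A *m B).
Proof. by case: m' / e. Qed.

Lemma castmxMr m n p p' (e : p = p') (A : 'M[R]_(m, n)) (B : 'M[R]_(n, p)) :
  A *m castmx (erefl, e) B = castmx (erefl, e) (A *m B).
Proof. by case: p' / e. Qed.

Lemma mulmx_castmx m n n' p (e : n = n') (A : 'M[R]_(m, n)) (B : 'M[R]_(n, p)) :
  castmx (erefl, e) A *m castmx (e, erefl) B = A *m B.
Proof. by case: n' / e. Qed.

Lemma tensmx_suml (I : finType) m n p q (F : I -> 'M[R]_(m, n)) (B : 'M[R]_(p, q)) :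
  (\sum_i F i) *t B = \sum_i (F i *t B).
Proof.
apply/matrixP => i j; rewrite !mxE !summxE mulr_suml.
by apply: eq_bigr => k _; rewrite !mxE.
Qed.

Lemma tensmx_sumr (I : finType) m n p q (A : 'M[R]_(m, n)) (F : I -> 'M[R]_(p, q)) :
  A *t (\sum_i F i) = \sum_i (A *t F i).
Proof.
apply/matrixP => i j; rewrite !mxE !summxE mulr_sumr.
by apply: eq_bigr => k _; rewrite !mxE.
Qed.

Lemma block_diag_mul m1 m2 n1 n2 p1 p2 (X : 'M[R]_(m1, n1)) (Y : 'M[R]_(m2, n2))
    (X' : 'M[R]_(n1, p1)) (Y' : 'M[R]_(n2, p2)) :
  block_mx X 0 0 Y *m block_mx X' 0 0 Y' = block_mx (X *m X') 0 0 (Y *m Y').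
Proof. by rewrite mulmx_block !mulmx0 !mul0mx !addr0 !add0r. Qed.

Lemma sum_block_diag (I : finType) m1 m2 n1 n2 (F : I -> 'M[R]_(m1, n1))
    (G : I -> 'M[R]_(m2, n2)) :
  \sum_i block_mx (F i) 0 0 (G i) = block_mx (\sum_i F i) 0 0 (\sum_i G i).
Proof.
apply: (big_rec3 (fun a b c => a = block_mx b 0 0 c)); first by rewrite block_mx0.
by move=> i a b c _ ->; rewrite add_block_mx !addr0.
Qed.

End Matrices.

Section Adjoint.
Variable C : numClosedFieldType.

Lemma adjM m n p (A : 'M[C]_(m, n)) (B : 'M[C]_(n, p)) : adj (A *m B) = adj B *m adj A.
Proof. by rewrite /adj map_mxM trmx_mul. Qed.

Lemma adjK m n (A : 'M[C]_(m, n)) : adj (adj A) = A.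
Proof. by apply/matrixP => i j; rewrite /adj !mxE conjCK. Qed.

Lemma adj_scale m n (a : C) (A : 'M[C]_(m, n)) : adj (a *: A) = a^* *: adj A.
Proof. by rewrite /adj map_mxZ linearZ. Qed.

Lemma adjB m n (A B : 'M[C]_(m, n)) : adj (A - B) = adj A - adj B.
Proof. by rewrite /adj map_mxB linearB. Qed.

Lemma adj0 m n : adj (0 : 'M[C]_(m, n)) = 0.
Proof. by rewrite /adj map_mx0 trmx0. Qed.

Lemma adj_mx1 n : adj (1%:M : 'M[C]_n) = 1%:M.
Proof. by rewrite /adj map_mx1 trmx1. Qed.

Lemma adj_block m1 m2 n1 n2 (a : 'M[C]_(m1, n1)) (b : 'M[C]_(m1, n2))
    (c : 'M[C]_(m2, n1)) (d : 'M[C]_(m2, n2)) :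
  adj (block_mx a b c d) = block_mx (adj a) (adj c) (adj b) (adj d).
Proof. by rewrite /adj map_block_mx tr_block_mx. Qed.

Lemma adj_row m n1 n2 (a : 'M[C]_(m, n1)) (b : 'M[C]_(m, n2)) :
  adj (row_mx a b) = col_mx (adj a) (adj b).
Proof. by rewrite /adj map_row_mx tr_row_mx. Qed.

Lemma adj_col m1 m2 n (a : 'M[C]_(m1, n)) (b : 'M[C]_(m2, n)) :
  adj (col_mx a b) = row_mx (adj a) (adj b).
Proof. by rewrite /adj map_col_mx tr_col_mx. Qed.

Lemma adj_cast m n m' n' (e : (m = m') * (n = n')) (A : 'M[C]_(m, n)) :
  adj (castmx e A) = castmx (e.2, e.1) (adj A).
Proof. by rewrite /adj map_castmx trmx_cast. Qed.

Lemma adj_tens m n p q (A : 'M[C]_(m, n)) (B : 'M[C]_(p, q)) :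
  adj (A *t B) = adj A *t adj B.
Proof. by rewrite /adj map_mxT trmx_tens. Qed.

Lemma adj_delta m n (i : 'I_m) (j : 'I_n) : adj (delta_mx i j : 'M[C]_(m, n)) = delta_mx j i.
Proof. by apply/matrixP => x y; rewrite /adj !mxE conjC_nat andbC. Qed.

Lemma adj_block_diag_mul m1 m2 n1 n2 p1 p2 (X : 'M[C]_(m1, n1)) (Y : 'M[C]_(m2, n2))
    (X' : 'M[C]_(m1, p1)) (Y' : 'M[C]_(m2, p2)) :
  adj (block_mx X 0 0 Y) *m block_mx X' 0 0 Y' = block_mx (adj X *m X') 0 0 (adj Y *m Y').
Proof. by rewrite adj_block !adj0 block_diag_mul. Qed.

Lemma adj_delta_mul_delta v (k l : 'I_v) :
  adj (delta_mx k 0 : 'cV[C]_v) *m delta_mx l 0 = (k == l)%:R%:M.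
Proof.
rewrite adj_delta mul_delta_mx_cond; apply/matrixP => x y.
by rewrite !ord1 mulmxnE !mxE.
Qed.

Lemma sum_delta_mul_adj v : \sum_k (delta_mx k 0 : 'cV[C]_v) *m adj (delta_mx k 0) = 1%:M.
Proof.
under eq_bigr => k _ do rewrite adj_delta mul_delta_mx.
by rewrite -mx1_sum_delta.
Qed.

End Adjoint.

Section Kraus.
Variable C : numClosedFieldType.

Lemma kraus_apply_comp (I J : finType) m n p q (K : I -> 'M[C]_(m, n))
    (L : J -> 'M[C]_(n, p)) (W : 'M[C]_(p, q)) (rho : 'M[C]_q) :
  kraus_apply K (kraus_apply L (W *m rho *m adj W)) =
  kraus_apply (fun ij : I * J => K ij.1 *m L ij.2 *m W) rho.
Proof.
rewrite /kraus_apply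
  -(pair_bigA _ (fun i j => K i *m L j *m W *m rho *m adj (K i *m L j *m W))) /=.
apply: eq_bigr => i _; rewrite mulmx_sumr mulmx_suml; apply: eq_bigr => j _.
by rewrite !adjM !mulmxA.
Qed.

Lemma kraus_apply_reindex (I J : finType) m n (h : I -> J) (K : I -> 'M[C]_(m, n))
    (L : J -> 'M[C]_(m, n)) (rho : 'M[C]_n) :
  injective h -> (forall i, L (h i) = K i) -> (forall j, j \notin codom h -> L j = 0) ->
  kraus_apply L rho = kraus_apply K rho.
Proof.
move=> h_inj hLK hL0; rewrite /kraus_apply (bigID (mem (codom h))) /=.
rewrite [X in _ + X]big1 ?addr0 => [|j /hL0->]; last by rewrite !mul0mx.
rewrite -big_uniq ?big_image; last by rewrite codomE map_inj_uniq ?enum_uniq.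
by apply: eq_bigr => i _; rewrite hLK.
Qed.

Lemma mxtrace_kraus_apply (I : finType) n (K : I -> 'M[C]_n) (rho : 'M[C]_n) :
  is_channel K -> \tr (kraus_apply K rho) = \tr rho.
Proof.
move=> hK; rewrite /kraus_apply linear_sum /=.
under eq_bigr => i _ do rewrite mxtrace_mulC mulmxA.
by rewrite -linear_sum -mulmx_suml hK mul1mx.
Qed.

Lemma mxtrace_mul_sum_adj (I : finType) n p (T : I -> 'M[C]_(n, p)) (Y : 'M[C]_p) :
  \tr ((\sum_i adj (T i) *m T i) *m Y) = \tr (kraus_apply T Y).
Proof.
rewrite mulmx_suml /kraus_apply !linear_sum /=; apply: eq_bigr => i _.
by rewrite -mulmxA mxtrace_mulC.
Qed.

Lemma mxtrace_proj_kraus_apply (I : finType) n (K : I -> 'M[C]_n) (P rho : 'M[C]_n) :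
  is_channel K -> (forall i, P *m K i = K i *m P) -> P *m P = P ->
  density rho -> P *m rho *m P = rho -> \tr (P *m kraus_apply K rho) = 1.
Proof.
move=> hK hPK hPP [_ tr_rho] hPrho.
have hPr : P *m rho = rho by rewrite -{1}hPrho !mulmxA hPP.
suff -> : P *m kraus_apply K rho = kraus_apply K rho by rewrite mxtrace_kraus_apply.
rewrite /kraus_apply mulmx_sumr; apply: eq_bigr => i _.
by rewrite !mulmxA hPK -(mulmxA (K i)) hPr.
Qed.

Lemma block_diag_no_leakage (I : finType) d v (K : I -> 'M[C]_(d + v)) :
  is_channel K -> (forall i, exists X Y, K i = block_mx X 0 0 Y) ->
  (forall rho, density rho -> projA C d v *m rho *m projA C d v = rho ->
     \tr (projA C d v *m kraus_apply K rho) = 1) /\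
  (forall rho, density rho -> projV C d v *m rho *m projV C d v = rho ->
     \tr (projV C d v *m kraus_apply K rho) = 1).
Proof.
move=> hK hdiag; split=> rho; apply: mxtrace_proj_kraus_apply => // [i|];
  try have [X [Y ->]] := hdiag i;
  by rewrite /projA /projV !block_diag_mul ?mul1mx ?mulmx1 ?mul0mx ?mulmx0.
Qed.

End Kraus.

Section Vacuum.
Variables (C : numClosedFieldType) (dA dB v : nat) (u : 'I_v -> 'cV[C]_v).

Lemma discT_tens_embedV (u0 : 'cV[C]_v) (k : 'I_v)
    (P : 'M[C]_dA) (Q : 'M[C]_v) (R : 'M[C]_dB) (S : 'M[C]_v) :
  discT dA dB u k *m (block_mx P 0 0 Q *t block_mx R 0 0 S) *m embedV dA dB u0
  = block_mx ((adj (u k) *m (S *m u0)) 0 0 *: P) 0 0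
             ((adj (u k) *m (Q *m u0)) 0 0 *: R).
Proof.
rewrite /discT /embedV /castc /castc' /castr /castr'.
rewrite mul_col_mx !mul_mx_row !mul_col_mx !castmxMl !castmxMr !tensmx_mul.
rewrite !mul_row_block !mul_row_col !mul1mx !mul0mx !mulmx0 !addr0 !add0r.
rewrite ?mul_mx_row ?mul_col_mx ?mul0mx ?mulmx0 !tens0mx !castmx0 !mulmx1 !mulmxA.
rewrite [adj (u k) *m S *m u0]mx11_scalar [adj (u k) *m Q *m u0]mx11_scalar.
rewrite tens_mx_scalar tens_scalar_mx !castmx_comp !castmx_id block_mxEh.
by rewrite !mxE eqxx !mulr1n.
Qed.

Lemma Psucc_sum_discT : \sum_k u k *m adj (u k) = 1%:M ->
  Psucc C dA dB v = \sum_k adj (discT dA dB u k) *m discT dA dB u k.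
Proof.
move=> u_complete; rewrite /discT /castc /castc'.
under eq_bigr => k _ do rewrite adj_col mul_row_col !adj_cast /= !mulmx_castmx
  !adj_tens !tensmx_mul !adj_row !adj0 !adj_mx1 !adjK !mul_col_row !mul1mx !mul0mx !mulmx0.
by rewrite big_split /= -tensmx_sumr -tensmx_suml !sum_block_diag u_complete !big1_eq.
Qed.

Lemma vac_discard_succ (psi0 : 'cV[C]_(dA + dB)) (Y : 'M[C]_((dA + v) * (dB + v))) :
  \sum_k u k *m adj (u k) = 1%:M -> \tr (kraus_apply (discT dA dB u) Y) = 1 ->
  vac_discard u psi0 Y = kraus_apply (discT dA dB u) Y.
Proof.
move=> u_complete trY.
by rewrite /vac_discard Psucc_sum_discT // mxtrace_mul_sum_adj trY subrr scale0r addr0.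
Qed.

End Vacuum.

Section VacuumExtension.
Variable C : numClosedFieldType.

Definition vac_ket v (a : 'I_v -> C) : 'cV[C]_v := \col_k a k.

Definition vac_ext d r v (K : 'I_r -> 'M[C]_d) (a : 'I_r -> 'I_v -> C) (u0 : 'cV[C]_v)
    (x : 'I_(r + 1)) : 'M[C]_(d + v) :=
  match split x with
  | inl i => block_mx (K i) 0 0 (vac_ket (a i) *m adj u0)
  | inr _ => block_mx 0 0 0 (1%:M - u0 *m adj u0)
  end.

Lemma adj_vac_ket_mul v (a : 'I_v -> C) :
  adj (vac_ket a) *m vac_ket a = (\sum_k `|a k| ^+ 2)%:M.
Proof.
apply/matrixP => i j; rewrite !ord1 !mxE eqxx mulr1n.
by apply: eq_bigr => k _; rewrite !mxE normCKC.
Qed.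

Variables (d r v : nat) (K : 'I_r -> 'M[C]_d) (a : 'I_r -> 'I_v -> C) (u0 : 'cV[C]_v).
Hypothesis u0_unit : adj u0 *m u0 = 1%:M.

Lemma vac_ext_lshift i :
  vac_ext K a u0 (lshift 1 i) = block_mx (K i) 0 0 (vac_ket (a i) *m adj u0).
Proof. by rewrite /vac_ext (unsplitK (inl i)). Qed.

Lemma vac_ext_rshift e : vac_ext K a u0 (rshift r e) = block_mx 0 0 0 (1%:M - u0 *m adj u0).
Proof. by rewrite /vac_ext (unsplitK (inr e)). Qed.

Lemma vac_ext_block_diag x : exists X Y, vac_ext K a u0 x = block_mx X 0 0 Y.
Proof. by rewrite /vac_ext; case: split => ?; do 2 eexists. Qed.

Lemma vac_ket_coef i k :
  (adj (delta_mx k 0 : 'cV[C]_v) *m (vac_ket (a i) *m adj u0 *m u0)) 0 0 = a i k.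
Proof. by rewrite -mulmxA u0_unit mulmx1 adj_delta -rowE !mxE. Qed.

Lemma vac_proj_u0 : (1%:M - u0 *m adj u0) *m u0 = 0.
Proof. by rewrite mulmxBl mul1mx -mulmxA u0_unit mulmx1 subrr. Qed.

Lemma vac_proj_adj_mul :
  adj (1%:M - u0 *m adj u0) *m (1%:M - u0 *m adj u0) = 1%:M - u0 *m adj u0.
Proof. by rewrite adjB adj_mx1 adjM adjK mulmxBr mulmx1 mulmxA vac_proj_u0 mul0mx subr0. Qed.

Lemma vac_ext_channel : is_channel K ->
  \sum_(i < r) \sum_(k < v) `|a i k| ^+ 2 = 1 -> is_channel (vac_ext K a u0).
Proof.
move=> hK ha; rewrite /is_channel big_split_ord big_ord1 /=.
under eq_bigr => i _ do rewrite vac_ext_lshift adj_block_diag_mul adjM adjK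
  mulmxA -(mulmxA u0) adj_vac_ket_mul mul_mx_scalar -scalemxAl.
rewrite vac_ext_rshift adj_block_diag_mul sum_block_diag add_block_mx.
rewrite -scaler_suml ha scale1r hK adj0 mul0mx !addr0 vac_proj_adj_mul addrC subrK.
by rewrite -scalar_mx_block.
Qed.

Lemma vac_ext_vacuum_extension : is_channel K ->
  \sum_(i < r) \sum_(k < v) `|a i k| ^+ 2 = 1 -> vacuum_extension K (vac_ext K a u0).
Proof.
move=> hK ha; have ext_channel := vac_ext_channel hK ha.
have [noleakA noleakV] := block_diag_no_leakage ext_channel vac_ext_block_diag.
split => // rho _; apply: (kraus_apply_reindex (h := lshift 1)) => [||x].
- exact: lshift_inj.
- by move=> i; rewrite vac_ext_lshift block_mxKul.
- case: (split_ordP x) => [i -> | e -> _]; first by rewrite codom_f.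
  by rewrite vac_ext_rshift block_mxKul.
Qed.

End VacuumExtension.

Section Superposition.
Variables (C : numClosedFieldType) (dA dB rA rB v : nat).
Variables (A : 'I_rA -> 'M[C]_dA) (B : 'I_rB -> 'M[C]_dB).
Variables (alpha : 'I_rA -> 'I_v -> C) (beta : 'I_rB -> 'I_v -> C).

Lemma Skraus_channel : is_channel A -> is_channel B ->
  \sum_(i < rA) \sum_(k < v) `|alpha i k| ^+ 2 = 1 ->
  \sum_(j < rB) \sum_(k < v) `|beta j k| ^+ 2 = 1 ->
  is_channel (Skraus A B alpha beta).
Proof.
move=> hA hB ha hb; rewrite /is_channel.
transitivity (\sum_i \sum_j \sum_k block_mx (`|beta j k| ^+ 2 *: (adj (A i) *m A i)) 0 0
                                         (`|alpha i k| ^+ 2 *: (adj (B j) *m B j))).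
  rewrite !pair_bigA; apply: eq_bigr => -[[i j] k] _ /=.
  by rewrite adj_block_diag_mul !adj_scale -!scalemxAl -!scalemxAr !scalerA -!normCKC.
under eq_bigr => i _ do under eq_bigr => j _ do rewrite sum_block_diag -!scaler_suml.
under eq_bigr => i _ do rewrite sum_block_diag.
rewrite sum_block_diag [RHS]scalar_mx_block; congr block_mx.
  by rewrite -hA; apply: eq_bigr => i _; rewrite -scaler_suml hb scale1r.
by rewrite -hB exchange_big; apply: eq_bigr => j _; rewrite -scaler_suml ha scale1r.
Qed.

Lemma kraus_apply_Skraus_vac (u0 : 'cV[C]_v) (rho : 'M[C]_(dA + dB)) :
  adj u0 *m u0 = 1%:M ->
  kraus_apply (discT dA dB (fun k => delta_mx k 0))
    (kraus_apply (tens_kraus (vac_ext A alpha u0) (vac_ext B beta u0))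
       (embedV dA dB u0 *m rho *m adj (embedV dA dB u0)))
  = kraus_apply (Skraus A B alpha beta) rho.
Proof.
move=> u0_unit; rewrite kraus_apply_comp.
apply: (kraus_apply_reindex
  (h := fun ijk : 'I_rA * 'I_rB * 'I_v => (ijk.2, (lshift 1 ijk.1.1, lshift 1 ijk.1.2)))).
- by move=> [[i j] k] [[i' j'] k'] [-> /val_inj-> /val_inj->].
- move=> [[i j] k]; rewrite /tens_kraus /= !vac_ext_lshift discT_tens_embedV.
  by rewrite !vac_ket_coef.
- move=> [k [a b]] /=.
  case: (split_ordP a) => [i ->|e ->]; case: (split_ordP b) => [j ->|e' ->].
  + by case/negP; exact: (codom_f _ (i, j, k)).
  all: rewrite /tens_kraus /= ?vac_ext_lshift ?vac_ext_rshift discT_tens_embedV.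
  all: by rewrite !vac_proj_u0 // ?scaler0 ?mulmx0 ?mxE ?scale0r block_mx0.
Qed.

End Superposition.

Theorem proposition2 (C : numClosedFieldType) (dA dB rA rB v : nat)
  (A : 'I_rA -> 'M[C]_dA) (B : 'I_rB -> 'M[C]_dB)
  (alpha : 'I_rA -> 'I_v -> C) (beta : 'I_rB -> 'I_v -> C) :
  (0 < dA)%N -> (0 < dB)%N -> (1 <= v)%N ->
  is_channel A -> is_channel B ->
  \sum_(i < rA) \sum_(k < v) `|alpha i k| ^+ 2 = 1 ->
  \sum_(j < rB) \sum_(k < v) `|beta j k| ^+ 2 = 1 ->
  exists (u : 'I_v -> 'cV[C]_v) (u0 : 'cV[C]_v) (psi0 : 'cV[C]_(dA + dB))
         (nA nB : nat) (At : 'I_nA -> 'M[C]_(dA + v)) (Bt : 'I_nB -> 'M[C]_(dB + v)),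
    [/\ (forall k l : 'I_v, adj (u k) *m u l = (k == l)%:R%:M)
        /\ adj u0 *m u0 = 1%:M,
        adj psi0 *m psi0 = 1%:M,
        vacuum_extension A At,
        vacuum_extension B Bt &
        forall rho : 'M[C]_(dA + dB), density rho ->
          kraus_apply (Skraus A B alpha beta) rho = superposition At Bt u0 u psi0 rho].
Proof.
move=> dA_gt0 _ v_gt0 hA hB ha hb.
pose u0 : 'cV[C]_v := delta_mx (Ordinal v_gt0) 0.
have u0_unit : adj u0 *m u0 = 1%:M by rewrite adj_delta_mul_delta eqxx.
exists (fun k => delta_mx k 0), u0, (delta_mx (lshift dB (Ordinal dA_gt0)) 0), (rA + 1)%N,
  (rB + 1)%N, (vac_ext A alpha u0), (vac_ext B beta u0).
split; do ?exact: vac_ext_vacuum_extension.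
- by split; first exact: adj_delta_mul_delta.
- by rewrite adj_delta_mul_delta eqxx.
move=> rho [_ tr_rho]; rewrite /superposition vac_discard_succ ?kraus_apply_Skraus_vac //.
  exact: sum_delta_mul_adj.
by rewrite mxtrace_kraus_apply //; apply: Skraus_channel.
Qed.
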